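(* Let $2\leq d_1\leq d_2$ and let $\rho$ be a quantum state on $\mathbb{C}^{d_1}\otimes\mathbb{C}^{d_2}$ such that $(T_{d_1}\otimes\mathrm{id}_{d_2})(\rho)=\rho$. Then $\mathrm{SN}(\rho)\leq d_1-1$.
   Context: $T_{d}$ is the transposition on $\mathcal{M}_d$ in the computational basis, $T_d(\ket{i}\bra{j})=\ket{j}\bra{i}$. A quantum state is a unit-trace positive semidefinite matrix. The Schmidt rank of $\ket{\psi}$ is the rank of $\mathrm{tr}_A\ket{\psi}\bra{\psi}$; $\mathrm{SN}(\rho)$ is the minimum over decompositions $\rho=\sum_ip_i\ket{\psi_i}\bra{\psi_i}$ into convex combinations of pure states of the maximal Schmidt rank of the $\ket{\psi_i}$. *)

From mathcomp Require Import all_boot all_order all_algebra all_field.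
Set Implicit Arguments. Unset Strict Implicit. Unset Printing Implicit Defensive.
Import Order.TTheory GRing.Theory Num.Theory.
Local Open Scope ring_scope.

(* Computational basis of C^{d1} (x) C^{d2}: |i> (x) |j> is the basis vector
   with index  mxvec_index i j = i * d2 + j  in 'I_(d1 * d2). *)

Definition adjmx (m n : nat) (A : 'M[algC]_(m, n)) : 'M[algC]_(n, m) :=
  (map_mx (@Num.conj _) A)^T.

Definition psd (n : nat) (A : 'M[algC]_n) : Prop :=
  adjmx A = A /\ forall v : 'cV[algC]_n, 0 <= (adjmx v *m A *m v) 0 0.

Definition is_state (n : nat) (rho : 'M[algC]_n) : Prop :=
  psd rho /\ \tr rho = 1.

(* (T_{d1} (x) id_{d2}) : partial transpose on the first factor, defined on
   matrix units |i j><k l|  |->  |k j><i l| and extended linearly *)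
Definition ptransA (d1 d2 : nat) (rho : 'M[algC]_(d1 * d2)) : 'M[algC]_(d1 * d2) :=
  \sum_(i < d1) \sum_(j < d2) \sum_(k < d1) \sum_(l < d2)
     rho (mxvec_index i j) (mxvec_index k l) *:
       delta_mx (mxvec_index k j) (mxvec_index i l).

Definition ptraceA (d1 d2 : nat) (X : 'M[algC]_(d1 * d2)) : 'M[algC]_d2 :=
  \matrix_(j < d2, l < d2) \sum_(i < d1) X (mxvec_index i j) (mxvec_index i l).

Definition schmidt_rank (d1 d2 : nat) (psi : 'cV[algC]_(d1 * d2)) : nat :=
  \rank (ptraceA (psi *m adjmx psi)).

(* This is the
   unfolding of "min over decompositions of the max Schmidt rank is <= r". *)
Definition schmidt_number_le (d1 d2 : nat) (rho : 'M[algC]_(d1 * d2)) (r : nat) : Prop :=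
  exists (m : nat) (p : 'I_m -> algC) (psi : 'I_m -> 'cV[algC]_(d1 * d2)),
    [/\ forall a, 0 <= p a,
        \sum_(a < m) p a = 1,
        forall a, (adjmx (psi a) *m psi a) 0 0 = 1,
        rho = \sum_(a < m) p a *: (psi a *m adjmx (psi a)) &
        forall a, (schmidt_rank (psi a) <= r)%N].

(* Write rho = G G†, and let S and T be the blocks of rows of G that belong to the
   first-factor indices 0 and 1.  Hermiticity together with invariance under the partial
   transpose makes S T† Hermitian.  For the orthogonal projection P = S† (S S†)⁺ S onto the
   row space of S one then has T P = S K with K Hermitian; diagonalising K = U† diag(k) U gives
     rho = (G P U†)(G P U†)† + (G (1 - P))(G (1 - P))†,
   where in every column of G P U† block 1 is a multiple of block 0, and in every column of
   G (1 - P) block 0 vanishes.  Either way two rows of the d1 x d2 coefficient matrix of the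
   column are dependent, so its Schmidt rank is below d1; normalising the columns gives the
   convex decomposition. *)

From mathcomp Require Import all_boot all_order all_algebra all_field.
Import Order.TTheory GRing.Theory Num.Theory Num.Def.
Set Implicit Arguments. Unset Strict Implicit. Unset Printing Implicit Defensive.
Local Open Scope ring_scope.
Local Open Scope sesquilinear_scope.

Lemma mul_diag_mx_delta (R : pzRingType) n (k : 'rV[R]_n) c :
  diag_mx k *m delta_mx c 0 = k 0 c *: delta_mx c (0 : 'I_1).
Proof.
apply/matrixP => i j; rewrite mul_diag_mx !mxE.
by have [->|] := eqVneq i c; rewrite ?mulr1 ?mulr0.
Qed.

Section HermitianMatrices.
Variable C : numClosedFieldType.

Lemma trmxC_diag_mx n (d : 'rV[C]_n) : (diag_mx d)^t* = diag_mx (map_mx conjC d).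
Proof. by rewrite tr_diag_mx map_diag_mx. Qed.

Lemma hermitian_spectral n (A : 'M[C]_n) : A^t* = A ->
  exists (U : 'M[C]_n) (d : 'rV[C]_n),
    [/\ U \is unitarymx, map_mx conjC d = d & A = U^t* *m diag_mx d *m U].
Proof.
move=> A_herm; have A_hermsym : A \is hermsymmx by rewrite sesquiE expr0 scale1r A_herm.
have U_unitary := spectral_unitarymx A.
exists (spectralmx A), (spectral_diag A); split => //.
  exact/realmxC/hermitian_spectral_diag_real.
by rewrite -invmx_unitary //; apply/orthomx_spectralP/hermitian_normalmx.
Qed.

Lemma mulmx_trmxC_eq0 m n (X : 'M[C]_(m, n)) : X *m X^t* = 0 -> X = 0.
Proof.
move=> XX0; apply/matrixP => i j; rewrite mxE.
have /matrixP/(_ i i) := XX0; rewrite !mxE => normi0.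
have /psumr_eq0P normsi0 : \sum_k `|X i k| ^+ 2 = 0.
  by rewrite -[RHS]normi0; apply: eq_bigr => k _; rewrite normCK !mxE.
move/eqP: (normsi0 (fun k _ => exprn_ge0 2 (normr_ge0 _)) j isT).
by rewrite expf_eq0 normr_eq0 => /eqP.
Qed.

Lemma psd_gram_factor n (A : 'M[C]_n) : A^t* = A ->
  (forall v : 'cV_n, 0 <= (v^t* *m A *m v) 0 0) -> exists G : 'M_n, A = G *m G^t*.
Proof.
move=> A_herm A_pos; have [U [d [U_unitary _ A_eq]]] := hermitian_spectral A_herm.
have d_ge0 i : 0 <= d 0 i.
  have := A_pos (U^t* *m delta_mx i 0).
  rewrite A_eq trmx_mul map_mxM trmxCK !mulmxA !mulmxtVK // trmx_delta map_delta_mx.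
  by rewrite -rowE -colE !mxE eqxx mulr1n.
exists (U^t* *m diag_mx (map_mx sqrtC d)).
rewrite A_eq trmx_mul map_mxM trmxCK trmxC_diag_mx !mulmxA.
rewrite -[U^t* *m _ *m diag_mx _]mulmxA mulmx_diag; congr (_ *m diag_mx _ *m _).
by apply/rowP => i; rewrite !mxE geC0_conj ?sqrtC_ge0 // -expr2 sqrtCK.
Qed.

Lemma unitary_diag_mul n (U : 'M[C]_n) (a b : 'rV[C]_n) : U \is unitarymx ->
  U^t* *m diag_mx a *m U *m (U^t* *m diag_mx b *m U) =
  U^t* *m diag_mx (\row_i (a 0 i * b 0 i)) *m U.
Proof.
by move=> U_unitary; rewrite !mulmxA mulmxtVK // -[U^t* *m _ *m _]mulmxA mulmx_diag.
Qed.

Lemma hermitian_pinv n (B : 'M[C]_n) : B^t* = B -> exists Bp : 'M_n,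
  [/\ Bp^t* = Bp, B *m Bp *m B = B & Bp *m B *m Bp = Bp].
Proof.
move=> B_herm; have [U [d [U_unitary d_real ->]]] := hermitian_spectral B_herm.
have mulfVK (x : C) : x * x^-1 * x = x.
  by have [->|x_neq0] := eqVneq x 0; rewrite ?mulr0 ?mul0r // mulfV // mul1r.
exists (U^t* *m diag_mx (map_mx GRing.inv d) *m U).
rewrite !unitary_diag_mul //; split.
- rewrite !trmx_mul !map_mxM trmxCK trmxC_diag_mx mulmxA.
  congr (_ *m diag_mx _ *m _); rewrite -map_mx_comp -[in RHS]d_real -map_mx_comp.
  by apply: eq_map_mx => x /=; rewrite fmorphV.
- by congr (_ *m diag_mx _ *m _); apply/rowP => i; rewrite !mxE mulfVK.
- by congr (_ *m diag_mx _ *m _); apply/rowP => i; rewrite !mxE -{2}[d 0 i]invrK mulfVK.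
Qed.

Lemma trmxC_sandwich m n (X : 'M[C]_(m, n)) (Y : 'M[C]_m) : Y^t* = Y ->
  (X^t* *m Y *m X)^t* = X^t* *m Y *m X.
Proof. by move=> Y_herm; rewrite !trmx_mul !map_mxM trmxCK Y_herm mulmxA. Qed.

Lemma cross_hermitian_factor p n (S T : 'M[C]_(p, n)) :
  (S *m T^t*)^t* = S *m T^t* -> exists P K : 'M[C]_n,
  [/\ P *m P = P, P^t* = P, S *m P = S, K^t* = K & T *m P = S *m K].
Proof.
set H := S *m T^t* => H_herm; pose B := S *m S^t*.
have [Bp [Bp_herm BBpB _]] : exists Bp : 'M_p,
    [/\ Bp^t* = Bp, B *m Bp *m B = B & Bp *m B *m Bp = Bp].
  by apply: hermitian_pinv; rewrite trmx_mul map_mxM trmxCK.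
have BBpS : B *m Bp *m S = S.
  apply/eqP; rewrite -subr_eq0 -{2}[S]mul1mx -mulmxBl; apply/eqP/mulmx_trmxC_eq0.
  rewrite trmx_mul map_mxM mulmxA -[_ *m S *m _]mulmxA -/B mulmxBl BBpB mul1mx.
  by rewrite subrr !mul0mx.
pose P := S^t* *m Bp *m S; pose K := S^t* *m (Bp *m H *m Bp) *m S.
have SP : S *m P = S by rewrite /P !mulmxA -/B BBpS.
exists P, K; split => //.
- by rewrite {1}/P -mulmxA SP.
- exact: trmxC_sandwich.
- by rewrite trmxC_sandwich //; have := trmxC_sandwich Bp H_herm; rewrite Bp_herm.
have TS : T *m S^t* = S *m T^t* by rewrite -[RHS]H_herm trmx_mul map_mxM trmxCK.
by rewrite /P /K /H !mulmxA TS -/B BBpS.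
Qed.

Lemma mul_proj_trmxC m n (X : 'M[C]_(m, n)) (P : 'M[C]_n) :
  P *m P = P -> P^t* = P -> X *m P *m (X *m P)^t* = X *m P *m X^t*.
Proof.
by move=> PP P_herm; rewrite trmx_mul map_mxM P_herm mulmxA -[X *m P *m P]mulmxA PP.
Qed.

Lemma gram_rowsub_decomposition p m q (f0 f1 : 'I_p -> 'I_m) (G : 'M[C]_(m, q)) :
  (mxsub f0 f1 (G *m G^t*))^t* = mxsub f0 f1 (G *m G^t*) ->
  exists Z : 'M[C]_(m, q + q), G *m G^t* = Z *m Z^t* /\ forall c,
    rowsub f0 (col c Z) = 0 \/
    exists k, rowsub f1 (col c Z) = k *: rowsub f0 (col c Z).
Proof.
pose S := rowsub f0 G; pose T := rowsub f1 G.
rewrite mxsub_mul -map_mxsub -trmx_mxsub -/S -/T => ST_herm.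
have [P [K [PP P_herm SP K_herm TP]]] := cross_hermitian_factor ST_herm.
have [U [k [U_unitary _ K_eq]]] := hermitian_spectral K_herm.
have QQ : (1%:M - P) *m (1%:M - P) = 1%:M - P.
  by rewrite mulmxBl !mulmxBr !mul1mx !mulmx1 PP subrr subr0.
have Q_herm : (1%:M - P)^t* = 1%:M - P.
  by rewrite linearB /= map_mxB trmx1 map_mx1 P_herm.
exists (row_mx (G *m P *m U^t*) (G *m (1%:M - P))); split.
  rewrite tr_row_mx map_col_mx mul_row_col [in X in X + _]trmx_mul map_mxM trmxCK.
  rewrite mulmxA mulmxKtV // !mul_proj_trmxC //.
  by rewrite -mulmxDl -mulmxDr addrC subrK mulmx1.
move=> c; case: (split_ordP c) => c' ->; [right; exists (k 0 c') | left].
  rewrite colKl !colE -!mul_rowsub_mx -/S -/T TP SP K_eq !mulmxA mulmxtVK //.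
  by rewrite -mulmxA mul_diag_mx_delta scalemxAr.
by rewrite colKr colE -!mul_rowsub_mx -/S mulmxBr mulmx1 SP subrr mul0mx.
Qed.
End HermitianMatrices.

Lemma adjmxE m n (A : 'M[algC]_(m, n)) : adjmx A = A^t*.
Proof. by rewrite /adjmx map_trmx. Qed.

Lemma adjmxZ m n a (A : 'M[algC]_(m, n)) : adjmx (a *: A) = a^* *: adjmx A.
Proof. by apply/matrixP => i j; rewrite !mxE rmorphM. Qed.

Lemma adjmx_mul_ge0 n (v : 'cV[algC]_n) : 0 <= (adjmx v *m v) 0 0.
Proof. by rewrite mxE sumr_ge0 // => x _; rewrite !mxE -normCKC exprn_ge0. Qed.

Lemma adjmx_mul_eq0 n (v : 'cV[algC]_n) : (adjmx v *m v) 0 0 = 0 -> v = 0.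
Proof.
move=> vv0; have vC0 : v^t* = 0.
  apply: mulmx_trmxC_eq0; rewrite trmxCK -adjmxE.
  by apply/matrixP => i j; rewrite !ord1 vv0 mxE.
by rewrite -[v]trmxCK vC0 trmx0 map_mx0.
Qed.

Lemma outer_prod_normalize n (v : 'cV[algC]_n) (p := (adjmx v *m v) 0 0)
    (u := (sqrtC p)^-1 *: v) :
  p != 0 -> (adjmx u *m u) 0 0 = 1 /\ v *m adjmx v = p *: (u *m adjmx u).
Proof.
move=> p_neq0; have s_real : ((sqrtC p)^-1)^* = (sqrtC p)^-1.
  by rewrite geC0_conj // invr_ge0 sqrtC_ge0 adjmx_mul_ge0.
have p_ss : p / sqrtC p / sqrtC p = 1.
  by rewrite -mulrA -invfM -expr2 sqrtCK mulfV.
rewrite /u adjmxZ s_real; split; rewrite -scalemxAl -scalemxAr !scalerA.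
  by rewrite mxE -/p mulrC mulrA p_ss.
by rewrite p_ss scale1r.
Qed.

Lemma mulmx_adj_sum_col m n (Z : 'M[algC]_(m, n)) :
  Z *m adjmx Z = \sum_c col c Z *m adjmx (col c Z).
Proof.
apply/matrixP => x y; rewrite !mxE summxE; apply: eq_bigr => c _.
by rewrite !mxE big_ord1 !mxE.
Qed.

Lemma mxvec_index_eq m n (a c : 'I_m) (b d : 'I_n) :
  (mxvec_index a b == mxvec_index c d) = (a == c) && (b == d).
Proof.
by rewrite /mxvec_index (inj_eq (@cast_ord_inj _ _ _)) (inj_eq enum_rank_inj).
Qed.

Lemma ptransA_mxvec_index d1 d2 (rho : 'M[algC]_(d1 * d2)) a b c d :
  ptransA rho (mxvec_index a b) (mxvec_index c d) =
  rho (mxvec_index c b) (mxvec_index a d).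
Proof.
rewrite /ptransA pair_big; under eq_bigr do rewrite pair_big.
rewrite pair_big summxE (big_only1 ((c, b), (a, d))) //= => [|[[i j] [k l]] ne _].
  by rewrite !mxE !eqxx mulr1.
rewrite !mxE !mxvec_index_eq /=.
by case: (a =P k) ne => [<-|]; case: (b =P j) => [<-|]; case: (c =P i) => [<-|];
  case: (d =P l) => [<-|]; rewrite ?eqxx ?andbF ?mulr0.
Qed.

Lemma rank_lt_dependent_rows (F : fieldType) m n (M : 'M[F]_(m, n)) i0 i1 :
  i0 != i1 -> row i0 M = 0 \/ (exists k, row i1 M = k *: row i0 M) ->
  (\rank M < m)%N.
Proof.
move=> i01 dep; have [c c_neq0 cM0] : exists2 c : 'rV_m, c != 0 & c *m M = 0.
  case: dep => [Mi0 | [k Mi1]].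
    exists (delta_mx 0 i0); last by rewrite -rowE.
    by apply/eqP => /matrixP/(_ 0 i0)/eqP; rewrite !mxE !eqxx oner_eq0.
  exists (k *: delta_mx 0 i0 - delta_mx 0 i1); last first.
    by rewrite mulmxBl -scalemxAl -!rowE Mi1 subrr.
  apply/eqP => /matrixP/(_ 0 i1)/eqP; rewrite !mxE !eqxx [i1 == i0]eq_sym (negPf i01).
  by rewrite mulr0 sub0r oppr_eq0 oner_eq0.
rewrite ltn_neqAle rank_leq_row andbT; apply: contra c_neq0 => M_free.
by rewrite -(mulmx_free_eq0 _ M_free) cM0.
Qed.

Lemma ptransA_block_hermitian d1 d2 (rho : 'M[algC]_(d1 * d2)) (i0 i1 : 'I_d1) :
  rho^t* = rho -> ptransA rho = rho ->
  (mxsub (mxvec_index i0) (mxvec_index i1) rho)^t* =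
  mxsub (mxvec_index i0) (mxvec_index i1) rho.
Proof.
move=> rho_herm rho_ptrans; apply/matrixP => j l.
by rewrite !mxE -{2}rho_ptrans ptransA_mxvec_index -{2}rho_herm 2!mxE.
Qed.

Section SchmidtRank.
Variables d1 d2 : nat.
Implicit Types (v : 'cV[algC]_(d1 * d2)) (X : 'M[algC]_(d1 * d2)).

Lemma ptraceAZ a X : ptraceA (a *: X) = a *: ptraceA X.
Proof.
by apply/matrixP => j l; rewrite !mxE mulr_sumr; apply: eq_bigr => i _; rewrite mxE.
Qed.

Lemma schmidt_rankZ a v : (schmidt_rank (a *: v) <= schmidt_rank v)%N.
Proof.
by rewrite /schmidt_rank adjmxZ -scalemxAl -scalemxAr scalerA ptraceAZ mxrank_scale.
Qed.

Lemma schmidt_rank_le_vec_mx v : (schmidt_rank v <= \rank (vec_mx v^T))%N.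
Proof.
have -> : schmidt_rank v = \rank ((vec_mx v^T)^T *m map_mx conjC (vec_mx v^T)).
  rewrite /schmidt_rank; congr (\rank _); apply/matrixP => j l; rewrite !mxE.
  by apply: eq_bigr => i _; rewrite !mxE big_ord1 !mxE.
by apply: leq_trans (mxrankM_maxl _ _) _; rewrite mxrank_tr.
Qed.

Lemma schmidt_rank_delta (i : 'I_d1) (j : 'I_d2) :
  (schmidt_rank (delta_mx (mxvec_index i j) ord0 : 'cV_(d1 * d2)) <= 1)%N.
Proof.
apply: leq_trans (schmidt_rank_le_vec_mx _) _.
by rewrite trmx_delta vec_mx_delta mxrank_delta.
Qed.

Lemma row_vec_mx_tr v i : row i (vec_mx v^T) = (rowsub (mxvec_index i) v)^T.
Proof. by apply/rowP => j; rewrite !mxE. Qed.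

Lemma schmidt_rank_lt_dependent_blocks v i0 i1 : i0 != i1 ->
  rowsub (mxvec_index i0) v = 0 \/
  (exists k, rowsub (mxvec_index i1) v = k *: rowsub (mxvec_index i0) v) ->
  (schmidt_rank v < d1)%N.
Proof.
move=> i01 dep; apply: leq_ltn_trans (schmidt_rank_le_vec_mx v) _.
apply: (rank_lt_dependent_rows i01); rewrite !row_vec_mx_tr.
by case: dep => [->|[k ->]]; [left; rewrite trmx0 | right; exists k; rewrite linearZ].
Qed.

End SchmidtRank.

Lemma schmidt_number_le_gram d1 d2 (rho : 'M[algC]_(d1 * d2)) r m
    (Z : 'M[algC]_(d1 * d2, m)) (e : 'cV[algC]_(d1 * d2)) :
  (adjmx e *m e) 0 0 = 1 -> (schmidt_rank e <= r)%N ->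
  \tr rho = 1 -> rho = Z *m adjmx Z ->
  (forall c, schmidt_rank (col c Z) <= r)%N ->
  schmidt_number_le rho r.
Proof.
move=> e_unit e_rank rho_tr rhoZ Z_rank.
pose p c := (adjmx (col c Z) *m col c Z) 0 0.
pose psi c := if p c == 0 then e else (sqrtC (p c))^-1 *: col c Z.
exists m, p, psi; split => [c | | c | | c].
- exact: adjmx_mul_ge0.
- rewrite -rho_tr rhoZ mxtrace_mulC; apply: eq_bigr => c _.
  by rewrite /p !mxE; apply: eq_bigr => x _; rewrite !mxE.
- by rewrite /psi; case: eqP => [//|/eqP p_neq0]; case: (outer_prod_normalize p_neq0).
- rewrite rhoZ mulmx_adj_sum_col; apply: eq_bigr => c _; rewrite /psi.
  case: eqP => [p0 | /eqP p_neq0]; last by case: (outer_prod_normalize p_neq0).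
  by rewrite p0 scale0r (adjmx_mul_eq0 p0) mul0mx.
- by rewrite /psi; case: eqP => // _; apply: leq_trans (schmidt_rankZ _ _) (Z_rank c).
Qed.

Theorem theorem20 (d1 d2 : nat) (rho : 'M[algC]_(d1 * d2)) :
  (2 <= d1)%N -> (d1 <= d2)%N ->
  is_state rho ->
  ptransA rho = rho ->
  schmidt_number_le rho d1.-1.
Proof.
move=> d1_ge2 d1_le_d2 [[rho_herm rho_pos] rho_tr] rho_ptrans.
pose i0 : 'I_d1 := Ordinal (ltnW d1_ge2); pose i1 : 'I_d1 := Ordinal d1_ge2.
pose j0 : 'I_d2 := Ordinal (leq_trans (ltnW d1_ge2) d1_le_d2).
have i01 : i0 != i1 by [].
rewrite adjmxE in rho_herm.
have [G rhoG] : exists G : 'M_(d1 * d2), rho = G *m G^t*.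
  by apply: psd_gram_factor rho_herm _ => v; rewrite -adjmxE.
have block_herm := ptransA_block_hermitian i0 i1 rho_herm rho_ptrans.
rewrite rhoG in block_herm.
have [Z [GZ Z_dep]] := gram_rowsub_decomposition block_herm.
pose e : 'cV[algC]_(d1 * d2) := delta_mx (mxvec_index i0 j0) 0.
apply: (@schmidt_number_le_gram _ _ _ _ _ Z e) => //.
- by rewrite adjmxE trmx_delta map_delta_mx mul_delta_mx mxE.
- by apply: leq_trans (schmidt_rank_delta _ _) _; rewrite ltn_predRL.
- by rewrite rhoG GZ adjmxE.
- move=> c; rewrite -ltnS (ltn_predK d1_ge2).
  exact: schmidt_rank_lt_dependent_blocks i01 (Z_dep c).
Qed.
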